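(* Let $\mathbf A$ be a residuated semigroup satisfying $xx=x$ for all $x$. The following are equivalent: (1) $(x/x)y=y(x/x)$ for all $x,y$; (2) $x\backslash x=x/x$ for all $x$; (3) $\mathbf A$ is commutative ($xy=yx$ for all $x,y$). Moreover, each of these conditions implies the conditions (H1), (H2), (H3): for all $x,y$, if $x/x=y/y$ then $(xy)/(xy)=x/x$, $(x/y)/(x/y)=x/x$ and $(x\backslash y)/(x\backslash y)=x/x$.
   Context: A residuated semigroup is a structure $\langle A,\le,\cdot,\backslash,/\rangle$ where $\langle A,\le\rangle$ is a poset, $\langle A,\cdot\rangle$ is a semigroup (we write $xy$ for $x\cdot y$), and for all $x,y,z$: $xy\le z\iff x\le z/y\iff y\le x\backslash z$. *)

Record residuated_semigroup := {
  rs_carrier :> Type;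
  rs_le : rs_carrier -> rs_carrier -> Prop;
  rs_mul : rs_carrier -> rs_carrier -> rs_carrier;
  rs_ldiv : rs_carrier -> rs_carrier -> rs_carrier;
  rs_rdiv : rs_carrier -> rs_carrier -> rs_carrier;
  rs_le_refl : forall x, rs_le x x;
  rs_le_antisym : forall x y, rs_le x y -> rs_le y x -> x = y;
  rs_le_trans : forall x y z, rs_le x y -> rs_le y z -> rs_le x z;
  rs_mul_assoc : forall x y z, rs_mul (rs_mul x y) z = rs_mul x (rs_mul y z);
  rs_res_r : forall x y z, rs_le (rs_mul x y) z <-> rs_le x (rs_rdiv z y);
  rs_res_l : forall x y z, rs_le (rs_mul x y) z <-> rs_le y (rs_ldiv x z)
}.

Arguments rs_le {_}.
Arguments rs_mul {_}.
Arguments rs_ldiv {_}.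
Arguments rs_rdiv {_}.

(* In an idempotent residuated semigroup, ab <= ba already follows from the two
   absorption laws b(ab) <= ab and (ab)a <= ab, because ab = a(ba)b.  These laws
   say b <= (ab)/(ab) and a <= (ab)\(ab), whereas a <= (ab)/(ab) and
   b <= (ab)\(ab) always hold; so x\x = x/x gives commutativity, and so does the
   centrality of the elements x/x.  Conversely, commutativity makes x\y = y/x.
   Of the conditions (H), the first holds in every idempotent residuated
   semigroup; the second needs x <= x/y, i.e. xy <= x, which commutativity
   reduces to yx <= x; the third is the second with x and y exchanged. *)

From Stdlib Require Import Setoid.

Declare Scope rs_scope.
Open Scope rs_scope.
Notation "x ⊑ y" := (rs_le x y) (at level 70) : rs_scope.
Notation "x ⋅ y" := (rs_mul x y) (at level 40, left associativity) : rs_scope.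
Notation "x // y" := (rs_rdiv x y) (at level 40, left associativity) : rs_scope.
Notation "x \\ y" := (rs_ldiv x y) (at level 40, left associativity) : rs_scope.

Section Residuation.

Variable A : residuated_semigroup.
Implicit Types a b t x y z : A.

Lemma le_rdiv t y z : t ⋅ y ⊑ z -> t ⊑ z // y.
Proof. apply rs_res_r. Qed.

Lemma le_ldiv t y z : y ⋅ t ⊑ z -> t ⊑ y \\ z.
Proof. apply rs_res_l. Qed.

Lemma rdiv_mul_le y z : z // y ⋅ y ⊑ z.
Proof. apply rs_res_r, rs_le_refl. Qed.

Lemma mul_ldiv_le y z : y ⋅ (y \\ z) ⊑ z.
Proof. apply rs_res_l, rs_le_refl. Qed.

Lemma mul_le_mono_l a b z : a ⊑ b -> z ⋅ a ⊑ z ⋅ b.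
Proof.
  intro le_ab; apply rs_res_l, rs_le_trans with b; [exact le_ab|].
  apply le_ldiv, rs_le_refl.
Qed.

Lemma mul_le_mono_r a b z : a ⊑ b -> a ⋅ z ⊑ b ⋅ z.
Proof.
  intro le_ab; apply rs_res_r, rs_le_trans with b; [exact le_ab|].
  apply le_rdiv, rs_le_refl.
Qed.

Lemma rdiv_self_le_rdiv_mul x y : x // x ⊑ (x ⋅ y) // (x ⋅ y).
Proof. apply le_rdiv; rewrite <- rs_mul_assoc; apply mul_le_mono_r, rdiv_mul_le. Qed.

Lemma rdiv_self_le_rdiv_rdiv x y : x // x ⊑ (x // y) // (x // y).
Proof.
  apply le_rdiv, le_rdiv; rewrite rs_mul_assoc.
  apply rs_le_trans with (x // x ⋅ x); [apply mul_le_mono_l, rdiv_mul_le|].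
  apply rdiv_mul_le.
Qed.

Lemma ldiv_rdiv_comm (mulC : forall x y, x ⋅ y = y ⋅ x) x y : x \\ y = y // x.
Proof.
  apply rs_le_antisym.
  - apply le_rdiv; rewrite mulC; apply mul_ldiv_le.
  - apply le_ldiv; rewrite mulC; apply rdiv_mul_le.
Qed.

Hypothesis mulxx : forall x, x ⋅ x = x.

Lemma le_rdiv_mul_l a b : a ⊑ (a ⋅ b) // (a ⋅ b).
Proof. apply le_rdiv; rewrite <- rs_mul_assoc, mulxx; apply rs_le_refl. Qed.

Lemma le_ldiv_mul_r a b : b ⊑ (a ⋅ b) \\ (a ⋅ b).
Proof. apply le_ldiv; rewrite rs_mul_assoc, mulxx; apply rs_le_refl. Qed.

Lemma rdiv_self_mul x : x // x ⋅ x = x.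
Proof.
  apply rs_le_antisym; [apply rdiv_mul_le|].
  rewrite <- (mulxx x) at 1; apply mul_le_mono_r, le_rdiv.
  rewrite mulxx; apply rs_le_refl.
Qed.

Lemma le_rdiv_self_of_mul t x : t ⋅ x ⊑ x // x -> t ⊑ x // x.
Proof.
  intro le_tx; apply le_rdiv; apply rs_res_r in le_tx.
  rewrite rs_mul_assoc, mulxx in le_tx; exact le_tx.
Qed.

Lemma mul_le_of_rdiv_self_eq x y : x // x = y // y -> x ⋅ y ⊑ y.
Proof.
  intro exy; apply rs_res_r; rewrite <- exy.
  apply le_rdiv; rewrite mulxx; apply rs_le_refl.
Qed.

(* ab = a(ba)b lets a unit of ba that commutes with a act as a unit of ab. *)
Lemma mul_unit_swap z a b :
  z ⋅ a = a ⋅ z -> z ⋅ (b ⋅ a) = b ⋅ a -> z ⋅ (a ⋅ b) = a ⋅ b.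
Proof.
  intros za zba.
  assert (abab : a ⋅ (b ⋅ a) ⋅ b = a ⋅ b)
    by (rewrite <- (mulxx (a ⋅ b)), !rs_mul_assoc; reflexivity).
  rewrite <- abab at 1; rewrite <- 2!rs_mul_assoc, za, (rs_mul_assoc _ a z), zba.
  exact abab.
Qed.

Lemma mulC_of_absorb :
  (forall a b, b ⋅ (a ⋅ b) ⊑ a ⋅ b) -> (forall a b, a ⋅ b ⋅ a ⊑ a ⋅ b) ->
  forall x y, x ⋅ y = y ⋅ x.
Proof.
  intros absorb_l absorb_r.
  assert (mul_le : forall x y, x ⋅ y ⊑ y ⋅ x).
  { intros x y; rewrite <- (mulxx (x ⋅ y)).
    replace (x ⋅ y ⋅ (x ⋅ y)) with (x ⋅ (y ⋅ x) ⋅ y)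
      by (rewrite !rs_mul_assoc; reflexivity).
    apply rs_le_trans with (y ⋅ x ⋅ y); [apply mul_le_mono_r, absorb_l | apply absorb_r]. }
  intros x y; apply rs_le_antisym; apply mul_le.
Qed.

Lemma mulC_of_ldiv_self (ldiv_self : forall x, x \\ x = x // x) x y : x ⋅ y = y ⋅ x.
Proof.
  apply mulC_of_absorb; intros a b.
  - apply rs_res_r; rewrite <- ldiv_self; apply le_ldiv_mul_r.
  - apply rs_res_l; rewrite ldiv_self; apply le_rdiv_mul_l.
Qed.

Lemma mulC_of_rdiv_self_central
  (central : forall x y, x // x ⋅ y = y ⋅ (x // x)) x y : x ⋅ y = y ⋅ x.
Proof.
  apply mulC_of_absorb; intros a b.
  - rewrite <- (mul_unit_swap (b ⋅ a // (b ⋅ a)) a b) at 2 by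
      (apply central || apply rdiv_self_mul).
    apply mul_le_mono_r, le_rdiv_mul_l.
  - apply rs_le_trans with (a ⋅ b ⋅ ((a ⋅ b) // (a ⋅ b))).
    { apply mul_le_mono_l, le_rdiv_mul_l. }
    rewrite <- central, rdiv_self_mul; apply rs_le_refl.
Qed.

Lemma rdiv_self_mul_eq x y : x // x = y // y -> (x ⋅ y) // (x ⋅ y) = x // x.
Proof.
  intro exy; apply rs_le_antisym; [|apply rdiv_self_le_rdiv_mul].
  apply le_rdiv_self_of_mul; rewrite exy; apply le_rdiv; rewrite rs_mul_assoc.
  apply rs_le_trans with (x ⋅ y); [apply rdiv_mul_le | apply mul_le_of_rdiv_self_eq, exy].
Qed.

Lemma rdiv_self_rdiv_eq (mulC : forall x y, x ⋅ y = y ⋅ x) x y :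
  x // x = y // y -> (x // y) // (x // y) = x // x.
Proof.
  intro exy; apply rs_le_antisym; [|apply rdiv_self_le_rdiv_rdiv].
  assert (le_x : x ⊑ x // y)
    by (apply le_rdiv; rewrite mulC; apply mul_le_of_rdiv_self_eq; auto).
  assert (le_unit : x // y ⊑ x // x).
  { rewrite exy; apply le_rdiv, rs_le_trans with (x // y ⋅ y ⋅ y).
    - rewrite rs_mul_assoc, mulxx; apply rs_le_refl.
    - apply rs_le_trans with (x ⋅ y).
      + apply mul_le_mono_r, rdiv_mul_le.
      + apply mul_le_of_rdiv_self_eq, exy. }
  apply le_rdiv_self_of_mul, rs_le_trans with ((x // y) // (x // y) ⋅ (x // y)).
  - apply mul_le_mono_l, le_x.
  - apply rs_le_trans with (x // y); [apply rdiv_mul_le | exact le_unit].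
Qed.

End Residuation.

Theorem proposition7p1 (A : residuated_semigroup)
  (idem : forall x : A, rs_mul x x = x) :
  let P1 := forall x y : A, rs_mul (rs_rdiv x x) y = rs_mul y (rs_rdiv x x) in
  let P2 := forall x : A, rs_ldiv x x = rs_rdiv x x in
  let P3 := forall x y : A, rs_mul x y = rs_mul y x in
  let H := forall x y : A, rs_rdiv x x = rs_rdiv y y ->
      rs_rdiv (rs_mul x y) (rs_mul x y) = rs_rdiv x x /\
      rs_rdiv (rs_rdiv x y) (rs_rdiv x y) = rs_rdiv x x /\
      rs_rdiv (rs_ldiv x y) (rs_ldiv x y) = rs_rdiv x x in
  (P1 <-> P2) /\ (P2 <-> P3) /\ (P1 -> H) /\ (P2 -> H) /\ (P3 -> H).
Proof.
  intros P1 P2 P3 H.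
  assert (P1P3 : P1 -> P3) by exact (mulC_of_rdiv_self_central _ idem).
  assert (P2P3 : P2 -> P3) by exact (mulC_of_ldiv_self _ idem).
  assert (P3P1 : P3 -> P1) by (intros mulC x y; apply mulC).
  assert (P3P2 : P3 -> P2) by (intros mulC x; apply ldiv_rdiv_comm, mulC).
  assert (P3H : P3 -> H).
  { intros mulC x y exy; split; [|split].
    - apply rdiv_self_mul_eq; assumption.
    - apply rdiv_self_rdiv_eq; assumption.
    - rewrite ldiv_rdiv_comm, exy by exact mulC.
      apply rdiv_self_rdiv_eq; auto. }
  split; [tauto | split; tauto].
Qed.
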